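(* Let $T\in\mathfrak{sl}_3(\mathbb R)$, $\mathbf Q\in\mathbb R^3$, $\mathbf p\in(\mathbb R^3)^*$, and let $X^{\mathrm{roll}}$ be the vector field on $S^2\times S^3$ induced by $\rho(T,\mathbf Q,\mathbf p)$. Then $X^{\mathrm{roll}}$ descends to a vector field on $S^2\times\mathrm{SO}_3$ under the double cover $S^2\times S^3\to S^2\times\mathrm{SO}_3$, $(\mathbf v,q)\mapsto(\mathbf v,\mathbf x\mapsto q\mathbf x\bar q)$, if and only if $T^t=-T$ and $\mathbf Q=-\mathbf p$ (identifying $\mathbb R^3$ and $(\mathbb R^3)^*$ via the Euclidean inner product).
   Context: $\mathrm{Im}(\mathbb O)$ is the space of matrices $\begin{pmatrix}x&\mathbf A\\ \mathbf b&-x\end{pmatrix}$, $x\in\mathbb R$, $\mathbf A\in\mathbb R^3$ column, $\mathbf b\in(\mathbb R^3)^*$ row. Vector products: for $\mathbf A,\mathbf A'\in\mathbb R^3$, $\mathbf A\times\mathbf A'=\det(\mathbf A,\mathbf A',\cdot)\in(\mathbb R^3)^*$; for $\mathbf b,\mathbf b'\in(\mathbb R^3)^*$, $\mathbf b\times\mathbf b'=\det(\mathbf b,\mathbf b',\cdot)\in\mathbb R^3$. The linear map $\rho(T,\mathbf Q,\mathbf p)$ on $\mathrm{Im}(\mathbb O)$ is $\begin{pmatrix}x&\mathbf A\\ \mathbf b&-x\end{pmatrix}\mapsto\begin{pmatrix}\mathbf p\mathbf A+\mathbf b\mathbf Q&T\mathbf A-\mathbf p\times\mathbf b+2\mathbf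 Qx\\ \mathbf Q\times\mathbf A-\mathbf bT+2\mathbf px&-\mathbf p\mathbf A-\mathbf b\mathbf Q\end{pmatrix}$; viewed as a linear vector field, it is tangent to the null cone $C=\{-x^2+\mathbf b\mathbf A=0\}$ and commutes with scaling, so it descends to $\widetilde Q^{\mathrm{oct}}=(C\setminus0)/\mathbb R^+$. With $\mathbb R^3\cong\mathrm{Im}(\mathbb H)\cong(\mathbb R^3)^*$, the diffeomorphism $\Phi:S^2\times S^3\to\widetilde Q^{\mathrm{oct}}$ is $\Phi(\mathbf v,q)=\mathbb R^+\begin{pmatrix}\mathrm{Re}(\mathbf vq)&\mathbf v+\mathrm{Im}(\mathbf vq)\\ \mathbf v-\mathrm{Im}(\mathbf vq)&-\mathrm{Re}(\mathbf vq)\end{pmatrix}$, and $X^{\mathrm{roll}}$ is the pullback under $\Phi$ of the descended vector field. Descending means $X^{\mathrm{roll}}$ is invariant under $(\mathbf v,q)\mapsto(\mathbf v,-q)$. *)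

From HB Require Import structures.
From mathcomp Require Import all_boot all_order all_algebra.
From mathcomp Require Import reals.
Set Implicit Arguments. Unset Strict Implicit. Unset Printing Implicit Defensive.
Import Order.TTheory GRing.Theory Num.Theory.
Local Open Scope ring_scope.

Section Defs.
Variable R : realType.

Definition crossC (a a' : 'cV[R]_3) : 'rV[R]_3 :=
  \row_j \det (row_mx a (row_mx a' (delta_mx j (0 : 'I_1))) : 'M[R]_3).
Definition crossR (b b' : 'rV[R]_3) : 'cV[R]_3 :=
  \col_j \det (col_mx b (col_mx b' (delta_mx (0 : 'I_1) j)) : 'M[R]_3).

Definition sc (m : 'M[R]_1) : R := m 0 0.

(* Im(O): matrices (x A ; b -x), stored as (x, A, b). *)
Record imO := ImO { ox : R; oA : 'cV[R]_3; ob : 'rV[R]_3 }.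
Definition imO_add (u w : imO) : imO :=
  ImO (ox u + ox w) (oA u + oA w) (ob u + ob w).
Definition imO_scale (l : R) (u : imO) : imO :=
  ImO (l * ox u) (l *: oA u) (l *: ob u).

Definition rho (T : 'M[R]_3) (Q : 'cV[R]_3) (p : 'rV[R]_3) (u : imO) : imO :=
  ImO (sc (p *m oA u) + sc (ob u *m Q))
      (T *m oA u - crossR p (ob u) + (2 * ox u) *: Q)
      (crossC Q (oA u) - ob u *m T + (2 * ox u) *: p).

(* Quaternions H = R^4 with Hamilton product; R^3 = Im(H). *)
Record quat := Quat { qa : R; qb : R; qc : R; qd : R }.
Definition qmul (x y : quat) : quat :=
  Quat (qa x * qa y - qb x * qb y - qc x * qc y - qd x * qd y)
       (qa x * qb y + qb x * qa y + qc x * qd y - qd x * qc y)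
       (qa x * qc y - qb x * qd y + qc x * qa y + qd x * qb y)
       (qa x * qd y + qb x * qc y - qc x * qb y + qd x * qa y).
Definition qadd (x y : quat) : quat :=
  Quat (qa x + qa y) (qb x + qb y) (qc x + qc y) (qd x + qd y).
Definition qopp (x : quat) : quat := Quat (- qa x) (- qb x) (- qc x) (- qd x).
Definition qdot (x y : quat) : R :=
  qa x * qa y + qb x * qb y + qc x * qc y + qd x * qd y.
Definition qRe (x : quat) : R := qa x.
Definition qIm (x : quat) : 'cV[R]_3 :=
  \col_i (match val i with 0 => qb x | 1 => qc x | _ => qd x end).
Definition imQ (v : 'cV[R]_3) : quat := Quat 0 (v 0 0) (v 1 0) (v 2 0).

Definition vdot (v w : 'cV[R]_3) : R := sc (v^T *m w).
Definition onS2 (v : 'cV[R]_3) : Prop := vdot v v = 1.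
Definition onS3 (q : quat) : Prop := qdot q q = 1.

(* A representative in the null cone of Phi(v, q) in Q^oct = (C \ 0)/R^+ :
   (Re(vq)  v + Im(vq) ; v - Im(vq)  -Re(vq)). *)
Definition Phi0 (v : 'cV[R]_3) (q : quat) : imO :=
  let w := qmul (imQ v) q in ImO (qRe w) (v + qIm w) (v - qIm w)^T.

(* Derivative of Phi0 at (v, q) in direction (dv, dq): Phi0 is the sum of a
   linear map in v and a bilinear map in (v, q), so this is its differential. *)
Definition dPhi0 (v : 'cV[R]_3) (q : quat) (dv : 'cV[R]_3) (dq : quat) : imO :=
  let w := qadd (qmul (imQ dv) q) (qmul (imQ v) dq) in
  ImO (qRe w) (dv + qIm w) (dv - qIm w)^T.

(* A vector field on S^2 x S^3 (in ambient coordinates R^3 x H). *)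
Definition vfield := 'cV[R]_3 -> quat -> 'cV[R]_3 * quat.

(* X is X^roll: the pullback under Phi of the vector field induced by rho on
   (C \ 0)/R^+.  At every point (v,q) of S^2 x S^3, X(v,q) is tangent to
   S^2 x S^3, and dPhi0 (X(v,q)) agrees with rho(Phi0(v,q)) modulo the
   direction of the ray R^+ Phi0(v,q) (i.e. they agree on the quotient). *)
Definition is_Xroll (T : 'M[R]_3) (Q : 'cV[R]_3) (p : 'rV[R]_3) (X : vfield)
  : Prop :=
  forall v q, onS2 v -> onS3 q ->
    vdot v (X v q).1 = 0 /\ qdot q (X v q).2 = 0 /\
    exists l : R,
      dPhi0 v q (X v q).1 (X v q).2 =
      imO_add (rho T Q p (Phi0 v q)) (imO_scale l (Phi0 v q)).

(* X descends along S^2 x S^3 -> S^2 x SO_3, (v,q) |-> (v, x |-> q x qbar):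
   X is invariant under the deck transformation sigma(v,q) = (v,-q),
   i.e. X(sigma(v,q)) = dsigma(X(v,q)) = (X_1(v,q), -X_2(v,q)). *)
Definition descends_SO3 (X : vfield) : Prop :=
  forall v q, onS2 v -> onS3 q ->
    X v (qopp q) = ((X v q).1, qopp (X v q).2).

End Defs.

(* Under Phi, the deck involution q |-> -q of S^3 becomes the involution
   deckO : (x A ; b -x) |-> (-x b^T ; A^T x) of Im(O), and conjugating
   rho(T, Q, p) by deckO gives rho(-T^T, -p^T, -Q^T).  Since dPhi is injective
   on tangent vectors modulo the ray of Phi, X^roll is deck-invariant exactly
   when rho(T, Q, p) and rho(-T^T, -p^T, -Q^T) induce the same vector field on
   the projectivised null cone.  Evaluating at the points Phi(e_i, 1) and
   Phi(e_i, e_i) shows that rho(T, Q, p) is determined by that field, whence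
   T = -T^T and Q = -p^T. *)

From HB Require Import structures.
From mathcomp Require Import all_boot all_order all_algebra.
From mathcomp Require Import reals ring lra.
Import Order.TTheory GRing.Theory Num.Theory.
Local Open Scope ring_scope.

Section RollingDescent.
Variable R : realType.
Implicit Types (T : 'M[R]_3) (Q v dv : 'cV[R]_3) (p : 'rV[R]_3).
Implicit Types (q dq x y : quat R) (u w : imO R) (l : R).

Lemma ord3P (i : 'I_3) : [\/ i = 0, i = 1 | i = 2].
Proof.
case: i => [[|[|[|//]]] ?]; [constructor 1 | constructor 2 | constructor 3];
  exact: val_inj.
Qed.

Lemma sum3E (F : 'I_3 -> R) : \sum_(i < 3) F i = F 0 + F 1 + F 2.
Proof.
rewrite !big_ord_recr big_ord0 /= add0r.
by congr (F _ + F _ + F _); apply: val_inj.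
Qed.

Lemma col3P (A B : 'cV[R]_3) :
  A = B <-> [/\ A 0 0 = B 0 0, A 1 0 = B 1 0 & A 2 0 = B 2 0].
Proof.
split=> [-> // | [h0 h1 h2]]; apply/matrixP => i j.
by rewrite ord1; case: (ord3P i) => ->.
Qed.

Lemma row3P (A B : 'rV[R]_3) :
  A = B <-> [/\ A 0 0 = B 0 0, A 0 1 = B 0 1 & A 0 2 = B 0 2].
Proof.
split=> [-> // | [h0 h1 h2]]; apply/matrixP => i j.
by rewrite ord1; case: (ord3P j) => ->.
Qed.

Lemma sum2E (F : 'I_2 -> R) : \sum_(i < 2) F i = F 0 + F 1.
Proof. by rewrite !big_ord_recr big_ord0 /= add0r; congr (F _ + F _); apply: val_inj. Qed.

Lemma det2E (M : 'M[R]_2) : \det M = M 0 0 * M 1 1 - M 0 1 * M 1 0.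
Proof.
rewrite (expand_det_row _ 0) sum2E /cofactor !det_mx11 !mxE /=.
rewrite (_ : lift 0 (0 : 'I_1) = 1); last exact: val_inj.
rewrite (_ : lift 1 (0 : 'I_1) = 0); last exact: val_inj.
by rewrite expr0 expr1 mul1r mulN1r mulrN.
Qed.

Lemma det3E (M : 'M[R]_3) : \det M =
  M 0 0 * (M 1 1 * M 2 2 - M 1 2 * M 2 1)
  - M 0 1 * (M 1 0 * M 2 2 - M 1 2 * M 2 0)
  + M 0 2 * (M 1 0 * M 2 1 - M 1 1 * M 2 0).
Proof.
rewrite (expand_det_row _ 0) sum3E /cofactor !det2E !mxE /=.
rewrite (_ : lift 0 (0 : 'I_2) = 1); last exact: val_inj.
rewrite (_ : lift 0 (1 : 'I_2) = 2); last exact: val_inj.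
rewrite (_ : lift 1 (0 : 'I_2) = 0); last exact: val_inj.
rewrite (_ : lift 1 (1 : 'I_2) = 2); last exact: val_inj.
rewrite (_ : lift 2 (0 : 'I_2) = 0); last exact: val_inj.
rewrite (_ : lift 2 (1 : 'I_2) = 1); last exact: val_inj.
by rewrite !exprS expr0; ring.
Qed.

Lemma row_mx3E (a a' d : 'cV[R]_3) i :
  let M : 'M_3 := row_mx a (row_mx a' d) in
  [/\ M i 0 = a i 0, M i 1 = a' i 0 & M i 2 = d i 0].
Proof.
rewrite /= (_ : 2 = rshift 1 (rshift 1 (0 : 'I_1))); last exact: val_inj.
rewrite (_ : 1 = rshift 1 (lshift 1 (0 : 'I_1))); last exact: val_inj.
rewrite (_ : 0 = lshift 2 (0 : 'I_1)); last exact: val_inj.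
split; first exact: row_mxEl.
  by transitivity (row_mx a' d i (lshift 1 0)); [exact: row_mxEr | exact: row_mxEl].
by transitivity (row_mx a' d i (rshift 1 0)); [exact: row_mxEr | exact: row_mxEr].
Qed.

Lemma crossCE (a a' : 'cV[R]_3) : crossC a a' =
  \row_j [:: a 1 0 * a' 2 0 - a 2 0 * a' 1 0;
             a 2 0 * a' 0 0 - a 0 0 * a' 2 0;
             a 0 0 * a' 1 0 - a 1 0 * a' 0 0]`_j.
Proof.
apply/matrixP => i j; rewrite !mxE det3E.
have [a0 a'0 d0] := row_mx3E a a' (delta_mx j 0) 0.
have [a1 a'1 d1] := row_mx3E a a' (delta_mx j 0) 1.
have [a2 a'2 d2] := row_mx3E a a' (delta_mx j 0) 2.
rewrite a0 a'0 d0 a1 a'1 d1 a2 a'2 d2 !mxE.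
by case: (ord3P j) => -> /=; ring.
Qed.

Lemma trmx_crossC (a a' : 'cV[R]_3) : (crossC a a')^T = crossR a^T a'^T.
Proof.
apply/matrixP => i j; rewrite !mxE -det_tr -[delta_mx 0 i]trmx_delta.
by congr (\det _); rewrite (tr_row_mx a (row_mx a' (delta_mx i 0))) tr_row_mx.
Qed.

Lemma crossR_trmx (b b' : 'rV[R]_3) : crossR b b' = (crossC b^T b'^T)^T.
Proof. by rewrite trmx_crossC !trmxK. Qed.

Lemma qoppK : involutive (@qopp R).
Proof. by case=> a b c d; rewrite /qopp /= !opprK. Qed.

Lemma qmulrN x y : qmul x (qopp y) = qopp (qmul x y).
Proof. by rewrite /qmul /qopp /=; congr Quat; ring. Qed.

Lemma qaddN x y : qadd (qopp x) (qopp y) = qopp (qadd x y).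
Proof. by rewrite /qadd /qopp /=; congr Quat; ring. Qed.

Lemma qImN x : qIm (qopp x) = - qIm x.
Proof. by apply/matrixP => i j; rewrite !mxE; case: (val i) => [|[|]]. Qed.

Lemma onS3N x : onS3 x -> onS3 (qopp x).
Proof. by rewrite /onS3 /qdot /= => <-; ring. Qed.

Lemma vdotE v v' : vdot v v' = v 0 0 * v' 0 0 + v 1 0 * v' 1 0 + v 2 0 * v' 2 0.
Proof. by rewrite /vdot /sc !mxE sum3E !mxE. Qed.

Lemma imQ_mulK v x : onS2 v -> qmul (imQ v) (qmul (imQ v) x) = qopp x.
Proof.
rewrite /onS2 vdotE => hv; rewrite /qmul /qopp /=.
by congr Quat; rewrite -[RHS]mul1r -hv; ring.
Qed.

Lemma imQ_mul_inj v x y : onS2 v -> qmul (imQ v) x = qmul (imQ v) y -> x = y.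
Proof.
move=> hv e.
by rewrite -[x]qoppK -[y]qoppK -(imQ_mulK v x hv) -(imQ_mulK v y hv) e.
Qed.

Lemma onS3_1 : onS3 (Quat 1 0 0 0 : quat R).
Proof. by rewrite /onS3 /qdot /=; ring. Qed.

Lemma onS3_imQ v : onS2 v -> onS3 (imQ v).
Proof. by rewrite /onS2 /onS3 vdotE /qdot /= => <-; ring. Qed.

Lemma imOP u w : u = w <-> [/\ ox u = ox w, oA u = oA w & ob u = ob w].
Proof. split=> [-> //|]; case: u w => x A b [x' A' b'] /= [-> -> ->] //. Qed.

Definition deckO u : imO R := ImO (- ox u) (ob u)^T (oA u)^T.

Lemma deckOK : involutive deckO.
Proof. by case=> x A b; rewrite /deckO /= opprK !trmxK. Qed.

Lemma deckO_add_scale u w l :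
  deckO (imO_add u (imO_scale l w)) = imO_add (deckO u) (imO_scale l (deckO w)).
Proof. by rewrite /deckO /=; congr ImO; rewrite ?linearD ?linearZ //=; ring. Qed.

Lemma Phi0_qopp v q : Phi0 v (qopp q) = deckO (Phi0 v q).
Proof. by rewrite /Phi0 /deckO qmulrN qImN /= opprK trmxK. Qed.

Lemma dPhi0_qopp v q dv dq :
  dPhi0 v (qopp q) dv (qopp dq) = deckO (dPhi0 v q dv dq).
Proof. by rewrite /dPhi0 /deckO !qmulrN qaddN qImN /= opprK trmxK. Qed.

Lemma rho_conj_deckO T Q p u :
  deckO (rho T Q p (deckO u)) = rho (- T^T) (- p^T) (- Q^T) u.
Proof.
case: u => x A b; apply/imOP; rewrite /rho /deckO /sc /=; split.
- by rewrite !mxE !sum3E !mxE; ring.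
- by apply/col3P; rewrite !crossR_trmx !crossCE !mxE !sum3E !mxE /=; split; ring.
- by apply/row3P; rewrite !crossR_trmx !crossCE !mxE !sum3E !mxE /=; split; ring.
Qed.

Lemma dPhi0_tangent_inj {v q dv1 dq1 dv2 dq2 W l1 l2} :
  onS2 v -> vdot v dv1 = 0 -> vdot v dv2 = 0 ->
  dPhi0 v q dv1 dq1 = imO_add W (imO_scale l1 (Phi0 v q)) ->
  dPhi0 v q dv2 dq2 = imO_add W (imO_scale l2 (Phi0 v q)) ->
  dv1 = dv2 /\ dq1 = dq2.
Proof.
move=> hv; have := hv; rewrite /onS2 !vdotE => v_unit t1 t2.
move=> /imOP[x1 /col3P[a10 a11 a12] /row3P[b10 b11 b12]].
move=> /imOP[x2 /col3P[a20 a21 a22] /row3P[b20 b21 b22]].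
move: x1 a10 a11 a12 b10 b11 b12 x2 a20 a21 a22 b20 b21 b22.
rewrite /dPhi0 /Phi0 /imO_add /imO_scale /= !mxE /=.
move=> x1 a10 a11 a12 b10 b11 b12 x2 a20 a21 a22 b20 b21 b22.
(* Adding the A- and b-components gives 2 dv = oA W + (ob W)^T + 2 l v. *)
have d0 : dv1 0 0 - dv2 0 0 = (l1 - l2) * v 0 0 by lra.
have d1 : dv1 1 0 - dv2 1 0 = (l1 - l2) * v 1 0 by lra.
have d2 : dv1 2 0 - dv2 2 0 = (l1 - l2) * v 2 0 by lra.
have l_eq : l1 = l2.
  have : (l1 - l2) * (v 0 0 * v 0 0 + v 1 0 * v 1 0 + v 2 0 * v 2 0) =
    v 0 0 * (dv1 0 0 - dv2 0 0) + v 1 0 * (dv1 1 0 - dv2 1 0)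
    + v 2 0 * (dv1 2 0 - dv2 2 0).
    by rewrite d0 d1 d2; ring.
  by rewrite v_unit mulr1; lra.
subst l2.
have dv_eq : dv1 = dv2 by apply/col3P; split; lra.
(* Now v dq1 and v dq2 have the same real and imaginary parts. *)
subst dv2; split=> //; apply: imQ_mul_inj hv _.
by rewrite /qmul /=; congr Quat; lra.
Qed.

Lemma onS2_delta i : onS2 (delta_mx i 0 : 'cV[R]_3).
Proof. by rewrite /onS2 vdotE !mxE; case: (ord3P i) => -> /=; ring. Qed.

Lemma Phi0_1 v : Phi0 v (Quat 1 0 0 0) = ImO 0 (2 *: v) 0.
Proof.
rewrite /Phi0.
have -> : qmul (imQ v) (Quat 1 0 0 0) = imQ v by rewrite /qmul /imQ /=; congr Quat; ring.
have -> : qIm (imQ v) = v.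
  by apply/matrixP => i j; rewrite !mxE ord1; case: (ord3P i) => ->.
by rewrite /= subrr trmx0 scaler_nat mulr2n.
Qed.

Lemma Phi0_imQ v : onS2 v -> Phi0 v (imQ v) = ImO (-1) v v^T.
Proof.
rewrite /onS2 vdotE /Phi0 => hv.
have -> : qmul (imQ v) (imQ v) = Quat (-1) 0 0 0.
  by rewrite /qmul /imQ /= -hv; congr Quat; ring.
have -> : qIm (Quat (-1) 0 0 0) = 0 :> 'cV[R]_3.
  by apply/matrixP => i j; rewrite !mxE; case: (val i) => [|[|]].
by rewrite /= addr0 subr0.
Qed.

Lemma rho_agree_on_line T Q p T' Q' p' A l l' :
  imO_add (rho T Q p (ImO 0 A 0)) (imO_scale l (ImO 0 A 0)) =
  imO_add (rho T' Q' p' (ImO 0 A 0)) (imO_scale l' (ImO 0 A 0)) ->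
  sc (p *m A) = sc (p' *m A) /\ crossC Q A = crossC Q' A.
Proof.
case/imOP => /=; rewrite !mul0mx !mulr0 !scale0r !scaler0 !subr0 !addr0.
by move=> /addIr ? _ ?.
Qed.

Lemma rho_agree_at_point T T' Q p v l l' :
  imO_add (rho T Q p (ImO (-1) v v^T)) (imO_scale l (ImO (-1) v v^T)) =
  imO_add (rho T' Q p (ImO (-1) v v^T)) (imO_scale l' (ImO (-1) v v^T)) ->
  T *m v = T' *m v.
Proof.
case/imOP => /= /addrI /eqP; rewrite !mulrN1 eqr_opp => /eqP <- + _.
by move/addIr/addIr/addIr.
Qed.

Lemma rho_determined_on_cone T Q p T' Q' p' :
  (forall v q, onS2 v -> onS3 q -> exists l l',
     imO_add (rho T Q p (Phi0 v q)) (imO_scale l (Phi0 v q)) =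
     imO_add (rho T' Q' p' (Phi0 v q)) (imO_scale l' (Phi0 v q))) ->
  [/\ T = T', Q = Q' & p = p'].
Proof.
move=> H.
have line (i : 'I_3) :
    sc (p *m (2 *: delta_mx i 0)) = sc (p' *m (2 *: delta_mx i 0)) /\
    crossC Q (2 *: delta_mx i 0) = crossC Q' (2 *: delta_mx i 0).
  have [l [l']] := H _ _ (onS2_delta i) onS3_1.
  by rewrite Phi0_1; apply: rho_agree_on_line.
have [p0 Q0] := line 0; have [p1 Q1] := line 1; have [p2 Q2] := line 2.
have p_eq : p = p'.
  move: p0 p1 p2; rewrite /sc !mxE !sum3E !mxE /= => p0 p1 p2.
  by apply/row3P; split; lra.
have Q_eq : Q = Q'.
  move: Q0 Q1 => /row3P[+ + +] /row3P[+ + +].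
  rewrite !crossCE !mxE /= => *.
  by apply/col3P; split; lra.
subst p' Q'; split=> //.
have col_eq (i : 'I_3) : col i T = col i T'.
  have [l [l']] := H _ _ (onS2_delta i) (onS3_imQ _ (onS2_delta i)).
  rewrite !colE Phi0_imQ; last exact: onS2_delta.
  exact: rho_agree_at_point.
apply/matrixP => j i.
by move/matrixP/(_ j 0): (col_eq i); rewrite !mxE.
Qed.

Lemma rho_deckO T Q p u :
  T^T = - T -> Q = - p^T -> rho T Q p (deckO u) = deckO (rho T Q p u).
Proof.
move=> hT ->; rewrite -[LHS]deckOK rho_conj_deckO hT opprK.
by rewrite linearN /= trmxK opprK.
Qed.

Lemma descends_of_skew T Q p X :
  is_Xroll T Q p X -> T^T = - T -> Q = - p^T -> descends_SO3 X.
Proof.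
move=> hX hT hQ v q hv hq.
have [t [_ [l E]]] := hX v q hv hq.
have [t' [_ [l' E']]] := hX v (qopp q) hv (onS3N _ hq).
have E'' : dPhi0 v (qopp q) (X v q).1 (qopp (X v q).2) =
    imO_add (rho T Q p (Phi0 v (qopp q))) (imO_scale l (Phi0 v (qopp q))).
  by rewrite dPhi0_qopp E deckO_add_scale Phi0_qopp rho_deckO.
have [e1 e2] := dPhi0_tangent_inj hv t' t E' E''.
by rewrite [X v (qopp q)]surjective_pairing e1 e2.
Qed.

Lemma skew_of_descends T Q p X :
  is_Xroll T Q p X -> descends_SO3 X -> T^T = - T /\ Q = - p^T.
Proof.
move=> hX hD.
have [hT hQ _] : [/\ T = - T^T, Q = - p^T & p = - Q^T].
  apply: rho_determined_on_cone => v q hv hq.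
  have [_ [_ [l E]]] := hX v q hv hq.
  have [_ [_ [l' E']]] := hX v (qopp q) hv (onS3N _ hq).
  exists l, l'; move: E'; rewrite hD // dPhi0_qopp E Phi0_qopp => E'.
  by rewrite -[LHS]deckOK E' deckO_add_scale rho_conj_deckO deckOK.
by split=> //; rewrite {1}hT linearN /= trmxK.
Qed.

End RollingDescent.

Theorem proposition8 (R : realType) (T : 'M[R]_3) (Q : 'cV[R]_3)
  (p : 'rV[R]_3) (X : vfield R) :
  \tr T = 0 ->
  is_Xroll T Q p X ->
  (descends_SO3 X <-> (T^T = - T /\ Q = - p^T)).
Proof.
move=> _ hX; split; first exact: skew_of_descends.
by case=> hT hQ; move/descends_of_skew: hX; apply.
Qed.
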